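(* Let $v$ be a scalar-valued function on an open set $\Omega\subseteq\mathbb{R}^n$ ($n>1$), let $\lambda\neq0$ be a complex number, let $\underline{f}$ be a vector-valued solution of the Clifford Riccati equation $\partial_{\underline{x}}\underline{f}+\underline{f}^2=v$, and let $\phi$ be a scalar-valued solution of the Schrödinger equation $(-\Delta_n - vI)\phi=\lambda^2\phi$. Then the vector-valued function \[\underline{h}=\sum_{j=1}^n h_je_j=\partial_{\underline{x}}^{-\underline{f}}\phi=\partial_{\underline{x}}\phi-\phi\,\underline{f}\] is a solution of the equation \[\underline{h}\,(-\Delta_n - v) - 2\sum_{j=1}^n h_j\,\partial_{x_j}\underline{f}=\lambda^2\underline{h},\] where $\underline{h}\,(-\Delta_n - v)$ stands for $-\Delta_n\underline{h}-\underline{h}\,v$.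
   Context: $\mathbb{R}_{0,n}$ is the real Clifford algebra generated by an orthonormal basis $e_1,\dots,e_n$ of $\mathbb{R}^n$ with relations $e_je_k+e_ke_j=-2\delta_{jk}$; $\mathbb{C}_n=\mathbb{R}_{0,n}\otimes\mathbb{C}$. The Dirac operator is $\partial_{\underline{x}}=\sum_{j=1}^n e_j\partial_{x_j}$, acting from the left; $\Delta_n=-\partial_{\underline{x}}^2$ is the Laplacian (acting componentwise). $M^f$ denotes right multiplication by $f$, and $\partial_{\underline{x}}^{\pm f}=\partial_{\underline{x}}\pm M^f$. *)

From HB Require Import structures.
From mathcomp Require Import all_boot all_order all_algebra.
From mathcomp Require Import all_classical all_reals all_analysis.
From mathcomp Require Import complex.

Set Implicit Arguments.
Unset Strict Implicit.
Unset Printing Implicit Defensive.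

Import Order.TTheory GRing.Theory Num.Theory.
Import numFieldNormedType.Exports.

Local Open Scope ring_scope.
Local Open Scope complex_scope.

Section Clifford.
Variables (R : realType) (n : nat).

(* Elements of the complex Clifford algebra C_n = R_{0,n} (x) C, written in
   the basis of blades e_A = e_{a_1} ... e_{a_k} (a_1 < ... < a_k), A a subset
   of {0,..,n-1} (e_{set0} = 1). *)
Definition Cl := {ffun {set 'I_n} -> R[i]}.

(* sign of e_A e_B = sgnAB A B * e_{A (+) B}: one sign per inversion
   (a in A, b in B, b < a) and one -1 per common generator (e_j^2 = -1). *)
Definition sgnAB (A B : {set 'I_n}) : R[i] :=
  (-1) ^+ (#|[set p : 'I_n * 'I_n | (p.1 \in A) && (p.2 \in B) && (p.2 < p.1)%N]|
           + #|A :&: B|).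

Definition symdiff (A B : {set 'I_n}) : {set 'I_n} := (A :\: B) :|: (B :\: A).

Definition clmul (a b : Cl) : Cl :=
  [ffun D => \sum_(A : {set 'I_n}) \sum_(B : {set 'I_n})
               (if symdiff A B == D then sgnAB A B * a A * b B else 0)].

Definition clscal (s : R[i]) : Cl := [ffun A => if A == finset.set0 then s else 0].

Definition clvec (h : 'I_n -> R[i]) : Cl :=
  [ffun A => \sum_(j < n) (if A == [set j] then h j else 0)].

Definition clgen (j : 'I_n) : Cl := [ffun A => if A == [set j] then 1 else 0].

Definition clcomp (a : Cl) (j : 'I_n) : R[i] := a [set j].

Definition pdC (j : 'I_n) (g : 'rV[R]_n -> R[i]) : 'rV[R]_n -> R[i] :=
  fun x => ('D_(delta_mx 0 j) (fun y => complex.Re (g y)) x)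
           +i* ('D_(delta_mx 0 j) (fun y => complex.Im (g y)) x).

Fixpoint iter_pd (s : seq 'I_n) (g : 'rV[R]_n -> R[i]) : 'rV[R]_n -> R[i] :=
  match s with
  | [::] => g
  | j :: s' => pdC j (iter_pd s' g)
  end.

Definition smooth_on (Omega : set 'rV[R]_n) (g : 'rV[R]_n -> R[i]) : Prop :=
  forall (s : seq 'I_n) (x : 'rV[R]_n), Omega x ->
    differentiable (fun y => complex.Re (iter_pd s g y)) x /\
    differentiable (fun y => complex.Im (iter_pd s g y)) x.

Definition pdCl (j : 'I_n) (F : 'rV[R]_n -> Cl) : 'rV[R]_n -> Cl :=
  fun x => [ffun A => pdC j (fun y => F y A) x].

Definition dirac_op (F : 'rV[R]_n -> Cl) : 'rV[R]_n -> Cl :=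
  fun x => \sum_(j < n) clmul (clgen j) (pdCl j F x).

Definition lapCl (F : 'rV[R]_n -> Cl) : 'rV[R]_n -> Cl :=
  fun x => \sum_(j < n) pdCl j (pdCl j F) x.

Definition lapC (g : 'rV[R]_n -> R[i]) : 'rV[R]_n -> R[i] :=
  fun x => \sum_(j < n) pdC j (pdC j g) x.

End Clifford.

From HB Require Import structures.
From mathcomp Require Import all_boot all_order all_algebra.
From mathcomp Require Import all_classical all_reals all_analysis.
From mathcomp Require Import complex ring.

(* Write h = sum_k h_k e_k with h_k = d_k phi - phi f_k.  The scalar and
   bivector parts of the Riccati equation say v = - div f - |f|^2 and
   d_a f_b = d_b f_a, so that d_k v = - Lap f_k - 2 sum_j f_j d_j f_k.
   Differentiating the Schroedinger equation Lap phi = - (lambda^2 + v) phi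
   in x_k then gives
     Lap h_k = d_k Lap phi - Lap phi f_k - 2 grad phi . grad f_k - phi Lap f_k
             = - (lambda^2 + v) h_k - 2 sum_j h_j d_j f_k,
   which is the claim coefficient by coefficient.  Commuting the partial
   derivatives uses Schwarz's theorem, obtained from the mean value theorem
   applied to second differences. *)

Set Implicit Arguments.
Unset Strict Implicit.
Unset Printing Implicit Defensive.

Import Order.TTheory GRing.Theory Num.Theory.
Import numFieldNormedType.Exports.

Local Open Scope ring_scope.

(** * Schwarz's theorem *)

Section SymmetryOfSecondDerivatives.
Local Open Scope classical_set_scope.
Variables (R : realType) (V : normedModType R).
Implicit Types (g : V -> R) (x u w : V).

Lemma differentiable_approx g x e : differentiable g x -> 0 < e ->
  exists2 d : R, 0 < d &
    forall y, `|y| < d -> `|g (y + x) - g x - 'd g x y| <= e * `|y|.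
Proof.
move=> dg e0; have /eqaddoP /(_ e e0) := diff_locally dg.
case/nbhs_norm0P => d /= d0 approx; exists d => // y /approx /=.
by rewrite opprD addrA.
Qed.

Lemma is_derive_along_line g u p t : differentiable g (t *: u + p) ->
  is_derive t 1 (fun s : R => g (s *: u + p)) ('D_u g (t *: u + p)).
Proof.
move=> dg; have dgu := @diff_derivable _ _ _ _ _ u dg.
have shiftE : (fun h : R => h^-1 *: (((fun s => g (s *: u + p)) \o shift t) (h *: 1)
                                   - g (t *: u + p)))
            = (fun h => h^-1 *: ((g \o shift (t *: u + p)) (h *: u) - g (t *: u + p))).
  by apply/funext => h /=; rewrite [h *: 1]mulr1 scalerDl addrA.
by apply: DeriveDef; rewrite /derivable /derive shiftE.
Qed.

Definition second_difference g x u w (s : R) :=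
  g (s *: u + (s *: w + x)) - g (s *: u + x) - g (s *: w + x) + g x.

Lemma second_differenceC g x u w s :
  second_difference g x u w s = second_difference g x w u s.
Proof. by rewrite /second_difference addrCA; ring. Qed.

Lemma second_difference_mvt g x u w (s : R) : 0 < s ->
  (forall t, 0 <= t <= s ->
     differentiable g (t *: u + (s *: w + x)) /\ differentiable g (t *: u + x)) ->
  exists2 c, 0 <= c <= s & second_difference g x u w s =
    s * ('D_u g (c *: u + (s *: w + x)) - 'D_u g (c *: u + x)).
Proof.
move=> s0 dg.
pose phi t := g (t *: u + (s *: w + x)) - g (t *: u + x).
pose dphi t := 'D_u g (t *: u + (s *: w + x)) - 'D_u g (t *: u + x).
have der t : 0 <= t <= s -> is_derive t 1 phi (dphi t).
  move=> /dg[dg1 dg2].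
  have [d1 D1] := is_derive_along_line dg1; have [d2 D2] := is_derive_along_line dg2.
  apply: DeriveDef; first exact: derivableB d1 d2.
  by rewrite (deriveB d1 d2) D1 D2.
have cont : {within `[0, s], continuous phi}.
  apply: continuous_in_subspaceT => t tI.
  have /der[dt _] : 0 <= t <= s by move: tI; rewrite inE /= in_itv.
  exact/differentiable_continuous/(derivable1_diffP _ _).1.
have der' t : t \in `]0, s[%R -> is_derive t 1 phi (dphi t).
  by rewrite in_itv /= => /andP[t0 ts]; apply: der; rewrite !ltW.
have [c cI phiE] := MVT_segment (ltW s0) der' cont.
exists c; first by move: cI; rewrite in_itv.
have -> : second_difference g x u w s = phi s - phi 0.
  by rewrite /phi /second_difference !scale0r !add0r; ring.
by rewrite phiE subr0 mulrC.
Qed.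

Lemma second_difference_approx (O : set V) g x u w e :
  open O -> O x -> (forall y, O y -> differentiable g y) ->
  differentiable ('D_u g) x -> 0 < e ->
  exists2 d : R, 0 < d & forall s : R, 0 < s -> s * (`|u| + `|w|) < d ->
    `|second_difference g x u w s - s ^+ 2 * 'd ('D_u g) x w|
      <= s ^+ 2 * (e * ((`|u| + `|w|) *+ 2)).
Proof.
move=> oO Ox dg dG e0.
have /nbhs0P /nbhs_norm0P [dO dO0 /= inO] : nbhs x O by apply: open_nbhs_nbhs.
have [dL dL0 approx] := differentiable_approx dG e0.
exists (Num.min dO dL); first by rewrite lt_min dO0 dL0.
move=> s s0; rewrite lt_min => /andP[sdO sdL].
set M := `|u| + `|w|; set L := 'd ('D_u g) x.
have small t : 0 <= t <= s -> `|t *: u + s *: w| <= s * M /\ `|t *: u| <= s * M.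
  move=> /andP[t0 ts].
  have tu : `|t *: u| <= s * `|u| by rewrite normrZ ger0_norm // ler_wpM2r.
  split.
    apply: le_trans (ler_normD _ _) _.
    by rewrite [`|s *: w|]normrZ gtr0_norm // /M mulrDr lerD2r.
  by apply: le_trans tu (ler_wpM2l (ltW s0) _); rewrite /M lerDl.
have [c /small[c1 c2] ->] : exists2 c, 0 <= c <= s & second_difference g x u w s =
    s * ('D_u g (c *: u + (s *: w + x)) - 'D_u g (c *: u + x)).
  apply: second_difference_mvt => // t /small[t1 t2].
  have inO' y : `|y| <= s * M -> O (y + x).
    by move=> ys; rewrite addrC; apply: inO; apply: le_lt_trans sdO.
  by rewrite addrA; split; apply/dg/inO'.
have LD : L (c *: u + s *: w) = L (c *: u) + s * L w.
  by rewrite linearD; congr (_ + _); exact: linearZ.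
have -> : s * ('D_u g (c *: u + (s *: w + x)) - 'D_u g (c *: u + x)) - s ^+ 2 * L w
    = s * (('D_u g (c *: u + s *: w + x) - 'D_u g x - L (c *: u + s *: w))
           - ('D_u g (c *: u + x) - 'D_u g x - L (c *: u))).
  by rewrite LD addrA; ring.
rewrite normrM gtr0_norm // expr2 -mulrA ler_pM2l //.
have -> : s * (e * (M *+ 2)) = e * (s * M) + e * (s * M) by rewrite mulr2n; ring.
apply: le_trans (ler_normB _ _) (lerD _ _).
  exact: le_trans (approx _ (le_lt_trans c1 sdL)) (ler_wpM2l (ltW e0) c1).
exact: le_trans (approx _ (le_lt_trans c2 sdL)) (ler_wpM2l (ltW e0) c2).
Qed.

Lemma eq_approx (a b : R) (K : R) : 0 <= K ->
  (forall e, 0 < e -> `|a - b| <= e * K) -> a = b.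
Proof.
move=> K0 ab; apply/eqP; rewrite -subr_eq0 -normr_le0; apply/ler_addgt0Pr => e e0.
have K1 : 0 < K + 1 by rewrite ltr_wpDl.
rewrite add0r (le_trans (ab _ (divr_gt0 e0 K1))) //.
by rewrite mulrAC ler_pdivrMr // ler_pM2l // lerDl.
Qed.

(* Both mixed derivatives are the limit of second_difference g x u w s / s ^+ 2
   as s -> 0+, by second_difference_approx applied to (u, w) and to (w, u). *)
Lemma derive_comm (O : set V) g x u w : open O -> O x ->
  (forall y, O y -> differentiable g y) ->
  differentiable ('D_u g) x -> differentiable ('D_w g) x ->
  'D_w ('D_u g) x = 'D_u ('D_w g) x.
Proof.
move=> oO Ox dg dGu dGw; rewrite (deriveE w dGu) (deriveE u dGw).
set M := `|u| + `|w|.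
apply: (@eq_approx _ _ ((M *+ 2) *+ 2)); first by rewrite !mulrn_wge0 ?addr_ge0.
move=> e e0.
have [d1 d10 approx1] := second_difference_approx w oO Ox dg dGu e0.
have [d2 d20 approx2] := second_difference_approx u oO Ox dg dGw e0.
have M1 : 0 < M + 1 by rewrite ltr_wpDl ?addr_ge0.
pose s := Num.min d1 d2 / (M + 1).
have s0 : 0 < s by rewrite divr_gt0 // lt_min d10 d20.
have : s * M < Num.min d1 d2.
  by rewrite /s mulrAC ltr_pdivrMr // ltr_pM2l ?ltrDl // lt_min d10 d20.
rewrite lt_min => /andP[sd1 sd2].
have {approx1}ap1 := approx1 s s0 sd1.
have {approx2}ap2 : `|second_difference g x w u s - s ^+ 2 * 'd ('D_w g) x u|
    <= s ^+ 2 * (e * ((`|w| + `|u|) *+ 2)) by apply: approx2; rewrite // addrC.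
rewrite [`|w| + `|u|]addrC -second_differenceC -/M in ap2.
set D := second_difference g x u w s in ap1 ap2.
have s2 : 0 < s ^+ 2 := exprn_gt0 2 s0.
rewrite -(ler_pM2l s2).
have -> : s ^+ 2 * `|'d ('D_u g) x w - 'd ('D_w g) x u|
    = `|(D - s ^+ 2 * 'd ('D_w g) x u) - (D - s ^+ 2 * 'd ('D_u g) x w)|.
  by rewrite -[in LHS](ger0_norm (ltW s2)) -normrM; congr `|_|; ring.
apply: le_trans (ler_normB _ _) _.
rewrite -/M in ap1.
by rewrite [(M *+ 2) *+ 2]mulr2n [e * _]mulrDr [s ^+ 2 * (_ + _)]mulrDr lerD.
Qed.

End SymmetryOfSecondDerivatives.

(** * Partial derivatives of complex-valued functions *)

Section ComplexPartialDerivative.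
Local Open Scope complex_scope.
Variables (R : realType) (n : nat).
Local Notation V := 'rV[R]_n.
Local Notation Re := (@complex.Re R).
Local Notation Im := (@complex.Im R).
Implicit Types (g : V -> R[i]) (x : V) (j : 'I_n).

Definition pd_derivable j g x :=
  derivable (Re \o g) x (delta_mx 0 j) /\ derivable (Im \o g) x (delta_mx 0 j).

Lemma pdCE j g x :
  pdC j g x = 'D_(delta_mx 0 j) (Re \o g) x +i* 'D_(delta_mx 0 j) (Im \o g) x.
Proof. by []. Qed.

Lemma pdC_cst j (c : R[i]) x : pdC j (fun=> c) x = 0.
Proof. by rewrite /pdC !derive_cst. Qed.

Lemma lapC_cst (c : R[i]) x : lapC (fun=> c) x = 0.
Proof.
rewrite /lapC big1 // => j _.
have -> : pdC j (fun=> c) = fun=> 0 by apply/funext => y; apply: pdC_cst.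
exact: pdC_cst.
Qed.

Lemma pd_derivable_cst j (c : R[i]) x : pd_derivable j (fun=> c) x.
Proof. by split; apply: derivable_cst. Qed.

Lemma near_eq_pdC j g1 g2 x : (\forall y \near x, g1 y = g2 y) ->
  pdC j g1 x = pdC j g2 x.
Proof.
move=> eq12; rewrite /pdC.
have eqRe : \forall y \near x, Re (g1 y) = Re (g2 y) by apply: filterS eq12 => y ->.
have eqIm : \forall y \near x, Im (g1 y) = Im (g2 y) by apply: filterS eq12 => y ->.
by rewrite (near_eq_derive _ eqRe) (near_eq_derive _ eqIm).
Qed.

Let complex_leibniz (a b c d da db dc dd : R) :
  ((a * dc + c * da) - (b * dd + d * db)) +i* ((a * dd + d * da) + (b * dc + c * db))
  = (da +i* db) * (c +i* d) + (a +i* b) * (dc +i* dd).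
Proof. by apply/eqP; rewrite eq_complex /=; apply/andP; split; apply/eqP; ring. Qed.

Section Rules.
Variables (j : 'I_n) (g1 g2 : V -> R[i]) (x : V).
Hypotheses (dg1 : pd_derivable j g1 x) (dg2 : pd_derivable j g2 x).

Let ReD : Re \o (fun y => g1 y + g2 y) = (Re \o g1) + (Re \o g2).
Proof. by apply/funext => y; rewrite !fctE /=; case: (g1 y); case: (g2 y). Qed.
Let ImD : Im \o (fun y => g1 y + g2 y) = (Im \o g1) + (Im \o g2).
Proof. by apply/funext => y; rewrite !fctE /=; case: (g1 y); case: (g2 y). Qed.
Let ReM : Re \o (fun y => g1 y * g2 y) = (Re \o g1) * (Re \o g2) - (Im \o g1) * (Im \o g2).
Proof. by apply/funext => y; rewrite !fctE /=; case: (g1 y); case: (g2 y). Qed.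
Let ImM : Im \o (fun y => g1 y * g2 y) = (Re \o g1) * (Im \o g2) + (Im \o g1) * (Re \o g2).
Proof.
by apply/funext => y; rewrite !fctE /=; case: (g1 y) => a b; case: (g2 y) => c d /=; rewrite addrC.
Qed.

Lemma pd_derivableD : pd_derivable j (fun y => g1 y + g2 y) x.
Proof.
case: dg1 dg2 => [r1 i1] [r2 i2]; rewrite /pd_derivable ReD ImD.
by split; [exact: derivableD | exact: derivableD].
Qed.

Lemma pdCD : pdC j (fun y => g1 y + g2 y) x = pdC j g1 x + pdC j g2 x.
Proof.
case: dg1 dg2 => [r1 i1] [r2 i2].
by rewrite !pdCE ReD ImD (deriveD r1 r2) (deriveD i1 i2).
Qed.

Lemma pd_derivableM : pd_derivable j (fun y => g1 y * g2 y) x.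
Proof.
case: dg1 dg2 => [r1 i1] [r2 i2]; rewrite /pd_derivable ReM ImM.
split; [exact: (derivableB (derivableM r1 r2) (derivableM i1 i2))
       | exact: (derivableD (derivableM r1 i2) (derivableM i1 r2))].
Qed.

Lemma pdCM : pdC j (fun y => g1 y * g2 y) x = pdC j g1 x * g2 x + g1 x * pdC j g2 x.
Proof.
case: dg1 dg2 => [r1 i1] [r2 i2].
rewrite !pdCE ReM ImM (deriveB (derivableM r1 r2) (derivableM i1 i2)).
rewrite (deriveD (derivableM r1 i2) (derivableM i1 r2)).
rewrite (deriveM r1 r2) (deriveM i1 i2) (deriveM r1 i2) (deriveM i1 r2).
have eta (z : R[i]) : z = Re z +i* Im z by case: z.
rewrite [g1 x]eta [g2 x]eta.
exact: complex_leibniz.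
Qed.

End Rules.

Lemma pd_derivableN j g x : pd_derivable j g x -> pd_derivable j (fun y => - g y) x.
Proof.
move=> dg; have -> : (fun y => - g y) = (fun y => -1 * g y).
  by apply/funext => y; rewrite mulN1r.
exact: (pd_derivableM (pd_derivable_cst j (-1) x) dg).
Qed.

Lemma pdCN j g x : pd_derivable j g x -> pdC j (fun y => - g y) x = - pdC j g x.
Proof.
move=> dg; have -> : (fun y => - g y) = (fun y => -1 * g y).
  by apply/funext => y; rewrite mulN1r.
by rewrite (pdCM (pd_derivable_cst j (-1) x) dg) pdC_cst mul0r add0r mulN1r.
Qed.

Lemma pd_derivableB j g1 g2 x : pd_derivable j g1 x -> pd_derivable j g2 x ->
  pd_derivable j (fun y => g1 y - g2 y) x.
Proof. by move=> dg1 /pd_derivableN; apply: pd_derivableD. Qed.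

Lemma pdCB j g1 g2 x : pd_derivable j g1 x -> pd_derivable j g2 x ->
  pdC j (fun y => g1 y - g2 y) x = pdC j g1 x - pdC j g2 x.
Proof.
move=> dg1 dg2; rewrite (pdCD dg1 (pd_derivableN dg2)).
by rewrite -(pdCN dg2).
Qed.

Lemma pd_derivable_sum j (I : Type) (s : seq I) (G : I -> V -> R[i]) x :
  (forall i, pd_derivable j (G i) x) ->
  pd_derivable j (fun y => \sum_(i <- s) G i y) x.
Proof.
move=> dG; elim: s => [|a s IH].
  by under [fun y => _]funext do rewrite big_nil; apply: pd_derivable_cst.
under [fun y => _]funext do rewrite big_cons.
exact: (pd_derivableD (dG a) IH).
Qed.

Lemma pdC_sum j (I : Type) (s : seq I) (G : I -> V -> R[i]) x :
  (forall i, pd_derivable j (G i) x) ->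
  pdC j (fun y => \sum_(i <- s) G i y) x = \sum_(i <- s) pdC j (G i) x.
Proof.
move=> dG; elim: s => [|a s IH].
  by under [fun y => _]funext do rewrite big_nil; rewrite pdC_cst big_nil.
under [fun y => _]funext do rewrite big_cons.
by rewrite big_cons (pdCD (dG a) (pd_derivable_sum s dG)) IH.
Qed.

Lemma near_eq_pd_derivable j g1 g2 x : (\forall y \near x, g1 y = g2 y) ->
  pd_derivable j g1 x -> pd_derivable j g2 x.
Proof.
move=> eq12 [dRe dIm].
split; [apply: near_eq_derivable dRe | apply: near_eq_derivable dIm];
  by apply: filterS eq12 => y /= ->.
Qed.

(* First-order partial derivatives near x and second-order ones at x: what the
   Leibniz rule needs at order two. *)
Definition pd2_derivable g x := forall j k,
  (\forall y \near x, pd_derivable j g y) /\ pd_derivable k (pdC j g) x.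

Section SecondDerivatives.
Variables (g1 g2 : V -> R[i]) (x : V).
Hypotheses (dg1 : pd2_derivable g1 x) (dg2 : pd2_derivable g2 x).

Let pd_derivable1 j g : pd2_derivable g x -> pd_derivable j g x.
Proof. by move=> /(_ j j)[/nbhs_singleton]. Qed.

Let near_pdCM j : \forall y \near x,
  pdC j (fun y => g1 y * g2 y) y = pdC j g1 y * g2 y + g1 y * pdC j g2 y.
Proof.
have [[near1 _] [near2 _]] := (dg1 j j, dg2 j j).
by apply: filterS2 near1 near2 => y; apply: pdCM.
Qed.

Lemma pd2_derivableM : pd2_derivable (fun y => g1 y * g2 y) x.
Proof.
move=> j k; have [[near1 d1] [near2 d2]] := (dg1 j k, dg2 j k).
split; first by apply: filterS2 near1 near2 => y; apply: pd_derivableM.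
apply: near_eq_pd_derivable (filterS _ (near_pdCM j)) _ => [y -> //|].
exact: pd_derivableD (pd_derivableM d1 (pd_derivable1 k dg2))
                     (pd_derivableM (pd_derivable1 k dg1) d2).
Qed.

Lemma pdC_pdCM j k : pdC k (pdC j (fun y => g1 y * g2 y)) x =
  pdC k (pdC j g1) x * g2 x + pdC j g1 x * pdC k g2 x
  + (pdC k g1 x * pdC j g2 x + g1 x * pdC k (pdC j g2) x).
Proof.
have [[_ d1] [_ d4]] := (dg1 j k, dg2 j k).
have [d2 d3] := (pd_derivable1 k dg2, pd_derivable1 k dg1).
rewrite (near_eq_pdC k (near_pdCM j)).
rewrite (pdCD (pd_derivableM d1 d2) (pd_derivableM d3 d4)).
by rewrite (pdCM d1 d2) (pdCM d3 d4).
Qed.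

Let sum_leibniz (A B C D : 'I_n -> R[i]) (a b : R[i]) :
  \sum_j (A j * a + B j * C j + (B j * C j + b * D j))
  = (\sum_j A j) * a + (\sum_j B j * C j) *+ 2 + b * \sum_j D j.
Proof. by rewrite !big_split /= -mulr_suml -mulr_sumr mulr2n !addrA. Qed.

Lemma lapCM : lapC (fun y => g1 y * g2 y) x =
  lapC g1 x * g2 x + (\sum_j pdC j g1 x * pdC j g2 x) *+ 2 + g1 x * lapC g2 x.
Proof. by rewrite [LHS]/lapC (eq_bigr _ (fun j _ => pdC_pdCM j j)) sum_leibniz. Qed.

Lemma lapCB : lapC (fun y => g1 y - g2 y) x = lapC g1 x - lapC g2 x.
Proof.
rewrite [LHS]/lapC -sumrB; apply: eq_bigr => j _.
have [[near1 d1] [near2 d2]] := (dg1 j j, dg2 j j).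
have nearB : \forall y \near x, pdC j (fun y => g1 y - g2 y) y = pdC j g1 y - pdC j g2 y.
  by apply: filterS2 near1 near2 => y; apply: pdCB.
by rewrite (near_eq_pdC j nearB) (pdCB d1 d2).
Qed.

End SecondDerivatives.

End ComplexPartialDerivative.

Section SmoothFunctions.
Variables (R : realType) (n : nat) (O : set 'rV[R]_n).
Hypothesis openO : open O.
Implicit Types (g : 'rV[R]_n -> R[i]) (j k : 'I_n).

Lemma iter_pd_rcons s j g : iter_pd s (pdC j g) = iter_pd (rcons s j) g.
Proof. by elim: s => //= a s ->. Qed.

Lemma smooth_on_pdC j g : smooth_on O g -> smooth_on O (pdC j g).
Proof. by move=> sg s y Oy; rewrite iter_pd_rcons; apply: sg. Qed.

Lemma smooth_pd_derivable j g y : smooth_on O g -> O y -> pd_derivable j g y.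
Proof.
move=> sg Oy; have [dRe dIm] := sg [::] y Oy.
by split; apply: diff_derivable.
Qed.

Lemma pdC_comm g x j k : O x -> smooth_on O g ->
  pdC j (pdC k g) x = pdC k (pdC j g) x.
Proof.
move=> Ox sg; rewrite /pdC.
have [dRe dIm] : (forall y, O y -> differentiable (fun y => complex.Re (g y)) y) /\
                 (forall y, O y -> differentiable (fun y => complex.Im (g y)) y).
  by split=> y /(sg [::])[].
have [dkRe dkIm] := sg [:: k] x Ox; have [djRe djIm] := sg [:: j] x Ox.
by rewrite (derive_comm openO Ox dRe dkRe djRe) (derive_comm openO Ox dIm dkIm djIm).
Qed.

Lemma smooth_pd2_derivable g x : smooth_on O g -> O x -> pd2_derivable g x.
Proof.
move=> sg Ox j k; split; last exact: smooth_pd_derivable (smooth_on_pdC j sg) Ox.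
by apply: filterS (open_nbhs_nbhs (conj openO Ox)) => y; apply: smooth_pd_derivable.
Qed.

Lemma lapC_pdC g x k : O x -> smooth_on O g -> lapC (pdC k g) x = pdC k (lapC g) x.
Proof.
move=> Ox sg.
have -> : pdC k (lapC g) x = \sum_j pdC k (pdC j (pdC j g)) x.
  apply: pdC_sum => j.
  exact: smooth_pd_derivable (smooth_on_pdC j (smooth_on_pdC j sg)) Ox.
apply: eq_bigr => j _.
have nearC : \forall y \near x, pdC k (pdC j g) y = pdC j (pdC k g) y.
  by apply: filterS (open_nbhs_nbhs (conj openO Ox)) => y Oy; apply: pdC_comm.
rewrite [RHS](pdC_comm k j Ox (smooth_on_pdC j sg)).
exact: esym (near_eq_pdC j nearC).
Qed.

End SmoothFunctions.

(** * The Clifford algebra *)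

Section FinFunZmod.
Variables (I : finType) (M : zmodType).
Implicit Types (u w : {ffun I -> M}) (i : I).

Lemma ffunDE u w i : (u + w) i = u i + w i. Proof. by rewrite ffunE. Qed.
Lemma ffunNE u i : (- u) i = - u i. Proof. by rewrite ffunE. Qed.
Lemma ffunBE u w i : (u - w) i = u i - w i. Proof. by rewrite !ffunE. Qed.

End FinFunZmod.

Section CliffordAlgebra.
Variables (R : realType) (n : nat).
Local Notation C := (R[i]).
Local Notation set0 := (finset.set0 : {set 'I_n}).
Implicit Types (a b : 'I_n -> C) (D : {set 'I_n}) (j k p q : 'I_n).

Definition singleton D : option 'I_n := [pick m | D == [set m]].

Lemma singleton_set1 k : singleton [set k] = Some k.
Proof.
rewrite /singleton; case: pickP => [m /eqP /esym /set1_inj -> //|/(_ k)].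
by rewrite eqxx.
Qed.

Lemma singletonP D :
  if singleton D is Some m then D = [set m] else forall m, D != [set m].
Proof. by rewrite /singleton; case: pickP => [m /eqP //|D1 m]; rewrite D1. Qed.

Lemma clvecE a D : clvec a D = if singleton D is Some m then a m else 0.
Proof.
rewrite ffunE; have := singletonP D; case: (singleton D) => [m ->|D1].
  rewrite (bigD1 m) //= eqxx big1 ?addr0 // => i /negPf im.
  by case: eqP => // /set1_inj mi; rewrite mi eqxx in im.
by rewrite big1 // => i _; rewrite (negPf (D1 i)).
Qed.

Lemma clgen_clvec j : clgen R j = clvec (fun m => (m == j)%:R).
Proof.
apply/ffunP => D; rewrite clvecE ffunE; have := singletonP D.
case: (singleton D) => [m ->|/(_ j)/negPf -> //].
by rewrite (inj_eq set1_inj); case: (m == j).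
Qed.

Lemma sum_delta (c : 'I_n -> C) p : \sum_j (p == j)%:R * c j = c p.
Proof.
rewrite (bigD1 p) //= eqxx mul1r big1 ?addr0 // => m /negPf mp.
by rewrite eq_sym mp mul0r.
Qed.

Lemma symdiff0l D : symdiff set0 D = D.
Proof. by rewrite /symdiff finset.set0D finset.set0U finset.setD0. Qed.

Lemma symdiff0r D : symdiff D set0 = D.
Proof. by rewrite /symdiff finset.setD0 finset.set0D finset.setU0. Qed.

Lemma symdiff_set1 j k : symdiff [set j] [set k] = if j == k then set0 else [set j; k].
Proof.
rewrite /symdiff; have [->|/negPf jk] := eqVneq j k.
  by rewrite finset.setDv finset.setU0.
apply/finset.setP => i; rewrite !inE.
by have [->|] := eqVneq i j; rewrite /= ?andbT ?andbF ?jk.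
Qed.

Lemma set2_eq j k p q : j != k -> p != q ->
  ([set j; k] == [set p; q]) = (j == p) && (k == q) || (j == q) && (k == p).
Proof.
move=> jk pq; apply/idP/idP; last first.
  by case/orP => /andP[/eqP-> /eqP->] //; rewrite finset.setUC.
move/eqP => jkpq.
have : j \in [set p; q] by rewrite -jkpq !inE eqxx.
have : k \in [set p; q] by rewrite -jkpq !inE eqxx orbT.
rewrite !inE => /orP[]/eqP kE /orP[]/eqP jE; rewrite jE kE ?eqxx ?orbT //.
all: by move: jk; rewrite jE kE eqxx.
Qed.

Lemma sgnAB_set0l D : sgnAB R set0 D = 1.
Proof.
rewrite /sgnAB finset.set0I cards0 addn0.
have -> : [set p : 'I_n * 'I_n | (p.1 \in set0) && (p.2 \in D) && (p.2 < p.1)%N] = finset.set0.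
  by apply/finset.setP => p; rewrite !inE.
by rewrite cards0 expr0.
Qed.

Lemma sgnAB_set0r D : sgnAB R D set0 = 1.
Proof.
rewrite /sgnAB finset.setI0 cards0 addn0.
have -> : [set p : 'I_n * 'I_n | (p.1 \in D) && (p.2 \in set0) && (p.2 < p.1)%N] = finset.set0.
  by apply/finset.setP => p; rewrite !inE andbF.
by rewrite cards0 expr0.
Qed.

(* e_j e_k = - e_k e_j for j != k, and e_j ^ 2 = -1. *)
Lemma sgnAB_set1 j k : sgnAB R [set j] [set k] = (-1) ^+ ((k < j)%N + (j == k)).
Proof.
rewrite /sgnAB; congr (_ ^+ (_ + _)).
  have -> : [set p : 'I_n * 'I_n | (p.1 \in [set j]) && (p.2 \in [set k]) && (p.2 < p.1)%N]
      = if (k < j)%N then [set (j, k)] else finset.set0.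
    apply/finset.setP => -[p1 p2]; rewrite !inE /=.
    case: (ltnP k j) => kj; rewrite /= ?inE ?xpair_eqE.
      by have [->|] := eqVneq p1 j; have [->|] := eqVneq p2 k; rewrite ?kj.
    by have [->|] := eqVneq p1 j; have [->|] := eqVneq p2 k; rewrite //= ltnNge kj.
  by case: ltnP => _; rewrite ?cards1 ?cards0.
have [->|jk] := eqVneq j k; first by rewrite finset.setIid cards1.
have -> : [set j] :&: [set k] = set0.
  by apply/finset.setP => i; rewrite !inE; have [->|] := eqVneq i j; rewrite ?(negPf jk).
by rewrite cards0.
Qed.

Lemma clmul_clscall s (u : Cl R n) D : clmul (clscal n s) u D = s * u D.
Proof.
rewrite ffunE (bigD1 set0) //= [X in _ + X]big1 ?addr0; last first.
  move=> A /negPf A0; apply: big1 => B _; rewrite ffunE A0.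
  by case: ifP; rewrite ?mulr0 ?mul0r.
rewrite (bigD1 D) //= symdiff0l eqxx sgnAB_set0l ffunE eqxx mul1r.
by rewrite big1 ?addr0 // => B /negPf DB; rewrite symdiff0l DB.
Qed.

Lemma clmul_clscalr (u : Cl R n) s D : clmul u (clscal n s) D = u D * s.
Proof.
rewrite ffunE (bigD1 D) //= (bigD1 set0) //= symdiff0r eqxx sgnAB_set0r.
rewrite ffunE eqxx mul1r big1 ?addr0; last first.
  by move=> B /negPf B0; rewrite ffunE B0 mulr0 if_same.
rewrite big1 ?addr0 // => A /negPf AD; apply: big1 => B _.
have [->|/negPf B0] := eqVneq B set0; first by rewrite symdiff0r AD.
by rewrite ffunE B0 mulr0 if_same.
Qed.

Lemma clmul_clvec a b D : clmul (clvec a) (clvec b) D =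
  \sum_j \sum_k (if symdiff [set j] [set k] == D
                 then sgnAB R [set j] [set k] * a j * b k else 0).
Proof.
have sum_clvecM c (F : {set 'I_n} -> C) :
    \sum_A clvec c A * F A = \sum_j c j * F [set j].
  under eq_bigr do rewrite ffunE mulr_suml.
  rewrite exchange_big; apply: eq_bigr => j _.
  rewrite (bigD1 [set j]) //= eqxx big1 ?addr0 // => A /negPf Aj.
  by rewrite Aj mul0r.
rewrite ffunE; transitivity (\sum_A clvec a A * \sum_B clvec b B *
    (if symdiff A B == D then sgnAB R A B else 0)).
  apply: eq_bigr => A _; rewrite mulr_sumr; apply: eq_bigr => B _.
  by case: ifP => _; rewrite ?mulr0 //; ring.
rewrite sum_clvecM; apply: eq_bigr => j _; rewrite sum_clvecM mulr_sumr.
by apply: eq_bigr => k _; case: ifP => _; rewrite ?mulr0 //; ring.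
Qed.

Lemma clmul_clvec_set0 a b : clmul (clvec a) (clvec b) set0 = - \sum_j a j * b j.
Proof.
rewrite clmul_clvec -sumrN; apply: eq_bigr => j _.
rewrite (bigD1 j) //= symdiff_set1 eqxx eqxx sgnAB_set1 ltnn eqxx expr1.
rewrite big1 ?addr0 ?mulN1r ?mulNr // => k /negPf kj.
rewrite symdiff_set1 [j == k]eq_sym kj; case: eqP => // jk0.
by move/finset.setP/(_ j): jk0; rewrite !inE eqxx.
Qed.

Lemma clmul_clvec_set2 a b p q : (p < q)%N ->
  clmul (clvec a) (clvec b) [set p; q] = a p * b q - a q * b p.
Proof.
move=> pq; have /negPf pq' : p != q by rewrite -val_eqE /= neq_ltn pq.
have sum2_delta (F : 'I_n -> 'I_n -> C) r s :
    \sum_j \sum_k (if (j == r) && (k == s) then F j k else 0) = F r s.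
  rewrite (bigD1 r) //= [X in _ + X]big1 ?addr0; last first.
    by move=> j /negPf jr; apply: big1 => k _; rewrite jr.
  rewrite (bigD1 s) //= !eqxx [X in _ + X]big1 ?addr0 // => k /negPf ks.
  by rewrite ks andbF.
rewrite clmul_clvec; transitivity (\sum_j \sum_k
   ((if (j == p) && (k == q) then a j * b k else 0)
    + (if (j == q) && (k == p) then - (a j * b k) else 0))).
  apply: eq_bigr => j _; apply: eq_bigr => k _; rewrite symdiff_set1.
  have [<-|jk] := eqVneq j k.
    have -> : (set0 == [set p; q]) = false.
      by apply/negP => /eqP/finset.setP/(_ p); rewrite !inE eqxx.
    have [->|_] := eqVneq j p; first by rewrite pq' /= addr0.
    by have [->|_] := eqVneq j q; rewrite /= addr0.
  rewrite set2_eq ?pq' //.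
  have [->|_] := eqVneq j p; have [->|_] := eqVneq k q; rewrite /= ?pq' /= ?addr0.
  - rewrite sgnAB_set1 (leq_gtF (ltnW pq)).
    by case: eqVneq => [pq0|_]; [move: pq; rewrite pq0 ltnn | rewrite expr0 mul1r].
  - by [].
  - by rewrite [q == p]eq_sym pq' andbF add0r.
  have [->|_] := eqVneq j q; have [->|_] := eqVneq k p; rewrite /= ?addr0 //.
  rewrite sgnAB_set1 pq add0r.
  by case: eqVneq => [qp0|_]; [move: pq; rewrite qp0 ltnn | rewrite expr1 mulN1r mulNr].
by rewrite (eq_bigr _ (fun j _ => big_split _ _ _ _ _)) big_split /= !sum2_delta.
Qed.

End CliffordAlgebra.

Section DiracOperator.
Variables (R : realType) (n : nat).
Local Notation V := 'rV[R]_n.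
Local Notation C := (R[i]).
Implicit Types (F : 'I_n -> V -> C) (phi : V -> C) (x : V) (j : 'I_n).

Lemma pdCl_clvec j F x :
  pdCl j (fun y => clvec (fun k => F k y)) x = clvec (fun k => pdC j (F k) x).
Proof.
apply/ffunP => D; rewrite ffunE clvecE.
under [fun y => _]funext do rewrite clvecE.
by case: (singleton D) => [m|] //; rewrite pdC_cst.
Qed.

Lemma pdCl_clscal j phi x :
  pdCl j (fun y => clscal n (phi y)) x = clscal n (pdC j phi x).
Proof.
apply/ffunP => D; rewrite !ffunE.
under [fun y => _]funext do rewrite ffunE.
by case: (D == finset.set0); rewrite ?pdC_cst.
Qed.

Lemma dirac_clscal phi x :
  dirac_op (fun y => clscal n (phi y)) x = clvec (fun k => pdC k phi x).
Proof.
apply/ffunP => D; rewrite /dirac_op sum_ffunE clvecE.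
under eq_bigr do rewrite pdCl_clscal clmul_clscalr clgen_clvec clvecE.
case: (singleton D) => [m|]; first exact: sum_delta.
by rewrite big1 // => j _; rewrite mul0r.
Qed.

Lemma dirac_clvec F x :
  dirac_op (fun y => clvec (fun k => F k y)) x =
  \sum_j clmul (clvec (fun m => (m == j)%:R)) (clvec (fun k => pdC j (F k) x)).
Proof. by apply: eq_bigr => j _; rewrite pdCl_clvec clgen_clvec. Qed.

Lemma lapCl_coef (G : V -> Cl R n) x D : lapCl G x D = lapC (fun y => G y D) x.
Proof.
rewrite /lapCl sum_ffunE; apply: eq_bigr => j _; rewrite ffunE.
by congr (pdC j _ x); apply/funext => y; rewrite ffunE.
Qed.

End DiracOperator.

(** * The Riccati and Schroedinger equations *)

Section CliffordRiccati.
Variables (R : realType) (n : nat).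

Definition riccati_potential (f : 'I_n -> 'rV[R]_n -> R[i]) y :=
  - (\sum_j pdC j (f j) y) - \sum_j f j y * f j y.

Variables (f : 'I_n -> 'rV[R]_n -> R[i]) (v : R[i]) (x : 'rV[R]_n).

(* The scalar part of d f + f^2 is - div f - |f|^2; its bivector part is the curl of f. *)
Hypothesis riccati :
  dirac_op (fun y => clvec (fun j => f j y)) x
    + clmul (clvec (fun j => f j x)) (clvec (fun j => f j x)) = clscal n v.

Lemma riccati_scalar_part : v = riccati_potential f x.
Proof.
have := congr1 (fun F : Cl R n => F finset.set0) riccati.
rewrite /= ffunDE dirac_clvec sum_ffunE clmul_clvec_set0 ffunE eqxx => <-.
congr (_ - _); rewrite -sumrN; apply: eq_bigr => j _.
by rewrite clmul_clvec_set0; congr (- _); under eq_bigr do rewrite eq_sym; apply: sum_delta.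
Qed.

Lemma riccati_curl_free a b : pdC a (f b) x = pdC b (f a) x.
Proof.
suff curl (p q : 'I_n) : (p < q)%N -> pdC p (f q) x = pdC q (f p) x.
  by case: (ltngtP a b) => [/curl|/curl/esym|/val_inj->].
move=> pq; have := congr1 (fun F : Cl R n => F [set p; q]) riccati.
rewrite /= ffunDE dirac_clvec sum_ffunE clmul_clvec_set2 // ffunE.
have -> : ([set p; q] == finset.set0) = false.
  by apply/negP => /eqP/finset.setP/(_ p); rewrite !inE eqxx.
under eq_bigr do rewrite clmul_clvec_set2 //.
by rewrite sumrB !sum_delta [f q x * _]mulrC subrr addr0 => /eqP; rewrite subr_eq0 => /eqP.
Qed.

End CliffordRiccati.

Section RiccatiSchroedinger.
Variables (R : realType) (n : nat) (O : set 'rV[R]_n).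
Variables (f : 'I_n -> 'rV[R]_n -> R[i]) (phi : 'rV[R]_n -> R[i]) (lambda : R[i]).
Hypotheses (openO : open O) (sf : forall j, smooth_on O (f j)) (sphi : smooth_on O phi).
Hypothesis curl_free : forall y, O y -> forall a b, pdC a (f b) y = pdC b (f a) y.
Local Notation U := (riccati_potential f).
Hypothesis schroedinger :
  forall y, O y -> - lapC phi y - U y * phi y = lambda ^+ 2 * phi y.
Variable x : 'rV[R]_n.
Hypothesis Ox : O x.

Let nearO : \forall y \near x, O y.
Proof. exact: open_nbhs_nbhs. Qed.

Lemma pdC_div k : pdC k (fun y => \sum_j pdC j (f j) y) x = lapC (f k) x.
Proof.
rewrite (pdC_sum _ (fun j => smooth_pd_derivable k (smooth_on_pdC j (sf j)) Ox)).
apply: eq_bigr => j _; rewrite [LHS](pdC_comm openO k j Ox (sf j)).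
by apply: near_eq_pdC; apply: filterS nearO => y Oy; apply: curl_free.
Qed.

Lemma pdC_sqnorm k : pdC k (fun y => \sum_j f j y * f j y) x =
  (\sum_j f j x * pdC j (f k) x) *+ 2.
Proof.
have df j := smooth_pd_derivable k (sf j) Ox.
rewrite (pdC_sum _ (fun j => pd_derivableM (df j) (df j))) mulr2n -big_split.
apply: eq_bigr => j _.
by rewrite (pdCM (df j) (df j)) (curl_free Ox k j) mulrC.
Qed.

Let pd_derivable_div k : pd_derivable k (fun y => \sum_j pdC j (f j) y) x.
Proof.
exact: pd_derivable_sum (fun j => smooth_pd_derivable k (smooth_on_pdC j (sf j)) Ox).
Qed.

Let pd_derivable_sqnorm k : pd_derivable k (fun y => \sum_j f j y * f j y) x.
Proof.
have df j := smooth_pd_derivable k (sf j) Ox.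
exact: pd_derivable_sum (fun j => pd_derivableM (df j) (df j)).
Qed.

Lemma pdC_riccati_potential k :
  pdC k U x = - lapC (f k) x - (\sum_j f j x * pdC j (f k) x) *+ 2.
Proof.
have dN := pd_derivableN (pd_derivable_div k).
rewrite /riccati_potential (pdCB dN (pd_derivable_sqnorm k)).
by rewrite (pdCN (pd_derivable_div k)) pdC_div pdC_sqnorm.
Qed.

Lemma pdC_lapC_schroedinger k :
  pdC k (lapC phi) x = - ((lambda ^+ 2 + U x) * pdC k phi x) - pdC k U x * phi x.
Proof.
have lapCE y : O y -> lapC phi y = - (lambda ^+ 2 * phi y) - U y * phi y.
  by move=> Oy; rewrite -(schroedinger Oy); ring.
have dphi := smooth_pd_derivable k sphi Ox.
have dc := pd_derivable_cst k (lambda ^+ 2) x.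
have dU : pd_derivable k U x.
  exact: pd_derivableB (pd_derivableN (pd_derivable_div k)) (pd_derivable_sqnorm k).
rewrite (near_eq_pdC k (filterS lapCE nearO)).
rewrite (pdCB (pd_derivableN (pd_derivableM dc dphi)) (pd_derivableM dU dphi)).
rewrite (pdCN (pd_derivableM dc dphi)) (pdCM dc dphi) (pdCM dU dphi) pdC_cst.
move: (pdC k phi x) (pdC k U x) (phi x) (U x) => a b c d; ring.
Qed.

Lemma riccati_schroedinger_component k :
  - lapC (fun y => pdC k phi y - phi y * f k y) x
  - (pdC k phi x - phi x * f k x) * U x
  - (\sum_j (pdC j phi x - phi x * f j x) * pdC j (f k) x) *+ 2
  = lambda ^+ 2 * (pdC k phi x - phi x * f k x).
Proof.
have d2 g : smooth_on O g -> pd2_derivable g x.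
  move=> sg; exact (smooth_pd2_derivable openO sg Ox).
have dphi := d2 _ sphi.
rewrite (lapCB (d2 _ (smooth_on_pdC k sphi)) (pd2_derivableM dphi (d2 _ (sf k)))).
rewrite (lapCM dphi (d2 _ (sf k))) (lapC_pdC openO k Ox sphi) pdC_lapC_schroedinger.
rewrite pdC_riccati_potential.
have -> : lapC phi x = - (lambda ^+ 2 * phi x) - U x * phi x.
  by rewrite -(schroedinger Ox); ring.
have -> : \sum_j (pdC j phi x - phi x * f j x) * pdC j (f k) x =
    \sum_j pdC j phi x * pdC j (f k) x - phi x * \sum_j f j x * pdC j (f k) x.
  by rewrite mulr_sumr -sumrB; apply: eq_bigr => j _; ring.
move: (\sum_j pdC j phi x * pdC j (f k) x) (\sum_j f j x * pdC j (f k) x).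
move: (pdC k phi x) (phi x) (f k x) (U x) (lapC (f k) x) => a b c d e s1 s2.
by rewrite !mulr2n; ring.
Qed.

End RiccatiSchroedinger.

Theorem proposition6p2 (R : realType) (n : nat) (Omega : set 'rV[R]_n)
  (v : 'rV[R]_n -> R[i]) (lambda : R[i])
  (f : 'I_n -> 'rV[R]_n -> R[i]) (phi : 'rV[R]_n -> R[i]) :
  (1 < n)%N ->
  open Omega ->
  lambda != 0 ->
  (forall j, smooth_on Omega (f j)) ->
  smooth_on Omega phi ->
  (forall x, Omega x ->
     dirac_op (fun y => clvec (fun j => f j y)) x
       + clmul (clvec (fun j => f j x)) (clvec (fun j => f j x))
     = clscal n (v x)) ->
  (forall x, Omega x -> - lapC phi x - v x * phi x = lambda ^+ 2 * phi x) ->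
  let h : 'rV[R]_n -> Cl R n := fun x =>
    dirac_op (fun y => clscal n (phi y)) x
      - clmul (clscal n (phi x)) (clvec (fun j => f j x)) in
  forall x, Omega x ->
    (- lapCl h x - clmul (h x) (clscal n (v x)))
      - (\sum_(j < n) clmul (clscal n (clcomp (h x) j))
                             (pdCl j (fun y => clvec (fun k => f k y)) x)) *+ 2
    = clmul (clscal n (lambda ^+ 2)) (h x).
Proof.
move=> _ openO _ sf sphi riccati schroedinger h x Ox.
have vE y : Omega y -> v y = riccati_potential f y.
  by move=> Oy; apply: riccati_scalar_part (riccati y Oy).
have curl y : Omega y -> forall a b, pdC a (f b) y = pdC b (f a) y.
  by move=> Oy; apply: riccati_curl_free (riccati y Oy).
have schroedingerU y : Omega y ->
    - lapC phi y - riccati_potential f y * phi y = lambda ^+ 2 * phi y.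
  by move=> Oy; rewrite -vE //; apply: schroedinger.
have -> : h = fun z => clvec (fun k => pdC k phi z - phi z * f k z).
  apply/funext => z; apply/ffunP => D.
  rewrite /h ffunBE dirac_clscal clmul_clscall !clvecE.
  by case: (singleton D) => //; rewrite mulr0 subr0.
apply/ffunP => D; rewrite !ffunBE ffunNE ffunMnE lapCl_coef sum_ffunE.
rewrite clmul_clscalr clmul_clscall.
under eq_bigr do rewrite clmul_clscall pdCl_clvec /clcomp !clvecE singleton_set1.
under [fun z => _]funext do rewrite clvecE.
rewrite clvecE; case: (singleton D) => [k|].
  rewrite vE //.
  exact (riccati_schroedinger_component openO sf sphi curl schroedingerU Ox k).
rewrite lapC_cst big1 => [|j _]; last by rewrite mulr0.
by rewrite mul0rn mulr0 mul0r !subr0 oppr0.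
Qed.
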